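(* Let $$\begin{array}{ccc} A & \xrightarrow{\varphi} & B\\ {\scriptstyle\varphi'}\downarrow & & \downarrow{\scriptstyle\psi}\\ C & \xrightarrow{\psi'} & D\end{array}$$ be a commutative square of local homomorphisms of noetherian local rings (so $\psi\circ\varphi=\psi'\circ\varphi'$), where $(A,m,K)$ is the local ring at the corner. Define $\operatorname{rd}(\mathcal S):=(\operatorname{rd}(\varphi)+\operatorname{rd}(\psi))-(\operatorname{rd}(\varphi')+\operatorname{rd}(\psi'))$. For a proper ideal $I$ of $A$, let $(A/I)\otimes_A\mathcal S$ denote the induced commutative square with maps $\varphi_I\colon A/I\to B/IB$, $\varphi'_I\colon A/I\to C/IC$, $\psi_{IB}\colon B/IB\to D/ID$, $\psi'_{IC}\colon C/IC\to D/ID$, and define $\operatorname{rd}((A/I)\otimes_A\mathcal S):=(\operatorname{rd}(\varphi_I)+\operatorname{rd}(\psi_{IB}))-(\operatorname{rd}(\varphi'_I)+\operatorname{rd}(\psi'_{IC}))$; in particular $K\otimes_A\mathcal S$ is the case $I=m$. Then for every proper ideal $I$ of $A$, $$\operatorname{rd}(\mathcal S)=\operatorname{rd}((A/I)\otimes_A\mathcal S)=\operatorname{rd}(K\otimes_A\mathcal S)=\operatorname{rd}(\psi_{mB})-\operatorname{rd}(\psi'_{mC}),$$ where $\psi_{mB}\colon B/mB\to D/mD$ and $\psi'_{mC}\colon C/mC\to D/mD$ are the induced maps.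
   Context: All rings are commutative and noetherian with identity; ring homomorphisms are unital. A local homomorphism $\varphi\colon (A,m,K)\to(B,n,L)$ is a ring homomorphism between local rings with $\varphi(m)\subseteq n$; here $K=A/m$, $L=B/n$. The regularity defect $\operatorname{rd}(\varphi)$ is the $L$-dimension of the kernel of the natural $L$-linear map $m/m^2\otimes_K L\to n/n^2$, $\bar x\otimes\bar b\mapsto \overline{\varphi(x)b}$. For a local homomorphism $\varphi\colon A\to B$ and an ideal $I$ of $A$, $\varphi_I\colon A/I\to B/IB$ denotes the induced map. *)

(* Commutative rings are modelled as [comUnitRingType]s
   (non-trivial commutative rings with their unit predicate); ideals are
   predicates [R -> Prop]. *)
From HB Require Import structures.
From mathcomp Require Import all_boot all_order all_algebra.
From Stdlib Require Import ClassicalEpsilon.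
Set Implicit Arguments. Unset Strict Implicit. Unset Printing Implicit Defensive.
Import GRing.Theory.
Local Open Scope ring_scope.

Section RingDefs.
Variable R : comUnitRingType.

Definition is_ideal (I : R -> Prop) : Prop :=
  [/\ I 0, (forall x y, I x -> I y -> I (x + y)) & (forall r x, I x -> I (r * x))].

Definition is_proper_ideal (I : R -> Prop) : Prop := is_ideal I /\ ~ I 1.

Definition zero_ideal : R -> Prop := fun x => x = 0.

Definition fin_gen (I : R -> Prop) : Prop :=
  exists s : seq R, forall x, I x <->
    exists c : seq R, x = \sum_(i < size s) c`_i * s`_i.

Definition noetherian : Prop := forall I, is_ideal I -> fin_gen I.

(* the set of non-units; R is local iff it is an ideal (the maximal ideal) *)
Definition maxid : R -> Prop := fun x => x \isn't a GRing.unit.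
Definition is_local : Prop := is_ideal maxid.

Definition local_noetherian : Prop := is_local /\ noetherian.

Definition prod_ideal (M N : R -> Prop) : R -> Prop := fun y =>
  exists s : seq (R * R), (forall p, p \in s -> M p.1 /\ N p.2) /\
    y = \sum_(p <- s) p.1 * p.2.

Definition msq_plus (I : R -> Prop) : R -> Prop := fun x =>
  exists y z, prod_ideal maxid maxid y /\ I z /\ x = y + z.

(* x_0..x_{e-1} in m whose images form a basis of the cotangent space of R/I,
   i.e. of  m/(m^2 + I)  over the residue field K = R/m *)
Definition cot_basis (I : R -> Prop) (e : nat) (x : 'I_e -> R) : Prop :=
  [/\ (forall i, maxid (x i)),
      (forall a : 'I_e -> R, msq_plus I (\sum_(i < e) a i * x i) ->
          forall i, maxid (a i)) &
      (forall y, maxid y -> exists a : 'I_e -> R,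
          msq_plus I (y - \sum_(i < e) a i * x i))].
End RingDefs.

Definition ext (R S : comUnitRingType) (f : R -> S) (I : R -> Prop) : S -> Prop :=
  fun y => exists s : seq (R * S), (forall p, p \in s -> I p.1) /\
    y = \sum_(p <- s) f p.1 * p.2.

Definition local_hom (R S : comUnitRingType) (f : {rmorphism R -> S}) : Prop :=
  forall x, maxid x -> maxid (f x).

(* Regularity defect of the induced map  f_I : R/I -> S/J  (J = I S).
   Given a basis x of m/(m^2+I) over K, the space  m/(m^2+I) (x)_K L  is
   identified with L^e (L = S/n), and the map to n/(n^2+J) sends the coordinate
   vector (b_i)_i to  sum_i f(x_i) b_i.  A family b_0..b_{k-1} of vectors of L^e
   (given by lifts in S) lies in the kernel and is L-linearly independent: *)
Definition ker_family (R S : comUnitRingType) (f : {rmorphism R -> S})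
  (J : S -> Prop) (e : nat) (x : 'I_e -> R) (k : nat) (b : 'I_k -> 'I_e -> S) : Prop :=
  (forall j, msq_plus J (\sum_(i < e) f (x i) * b j i)) /\
  (forall c : 'I_k -> S, (forall i, maxid (\sum_(j < k) c j * b j i)) ->
      forall j, maxid (c j)).

(* r is the L-dimension of that kernel *)
Definition rd_rel_spec (R S : comUnitRingType) (f : {rmorphism R -> S})
  (I : R -> Prop) (J : S -> Prop) (r : nat) : Prop :=
  exists e (x : 'I_e -> R), cot_basis I x /\
    (exists b : 'I_r -> 'I_e -> S, ker_family f J x b) /\
    (forall k (b : 'I_k -> 'I_e -> S), ker_family f J x b -> (k <= r)%N).

Definition rd_rel (R S : comUnitRingType) (f : {rmorphism R -> S})
  (I : R -> Prop) (J : S -> Prop) : nat :=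
  epsilon (inhabits 0%N) (rd_rel_spec f I J).

(* rd(f_I) for  f_I : R/I -> S/IS *)
Definition rdq (R S : comUnitRingType) (f : {rmorphism R -> S}) (I : R -> Prop) : nat :=
  rd_rel f I (ext f I).

Definition rd (R S : comUnitRingType) (f : {rmorphism R -> S}) : nat :=
  rdq f (@zero_ideal R).

From HB Require Import structures.
From mathcomp Require Import all_boot all_order all_algebra.
From mathcomp Require Import ring zify.
From Stdlib Require Import Classical ClassicalEpsilon.
From Stdlib Require Import FunctionalExtensionality PropExtensionality.
Set Implicit Arguments. Unset Strict Implicit. Unset Printing Implicit Defensive.
Import GRing.Theory.
Local Open Scope ring_scope.

(* Let f : (A, m, K) -> (B, n, L) be a local homomorphism and I an ideal inside m.
   Fix a basis x of m/(m^2 + I) over K and a basis y of n/(n^2 + IB) over L, and let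
   V be the matrix over L of the classes of the f(x_i) in the coordinates y. Then
   rd(f_I) is the dimension of the left kernel of V, while the row space of V is the
   image of n^2 + mB in n/(n^2 + IB). Writing edim for embedding dimension, this gives
     rd(f_I) = edim(A/I) - edim(B/IB) + edim(B/mB).
   Along either side of the square the terms edim(A/I) and edim(D/ID) appear with
   opposite signs, so rd((A/I) (x)_A S) does not depend on I; for I = m the defects
   of phi_m and phi'_m vanish because edim K = 0. *)

Lemma sum_delta (R : pzSemiRingType) n (i : 'I_n) (F : 'I_n -> R) :
  \sum_l (i == l)%:R * F l = F i.
Proof.
rewrite (bigD1 i) //= eqxx mul1r big1 ?addr0 // => l hl.
by rewrite eq_sym (negPf hl) mul0r.
Qed.

Section Ideals.
Variable R : comUnitRingType.
Implicit Types (P J : R -> Prop) (x y z : R).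

Lemma ideal0 P : is_ideal P -> P 0. Proof. by case. Qed.

Lemma idealD P x y : is_ideal P -> P x -> P y -> P (x + y).
Proof. by case=> _ hD _; apply: hD. Qed.

Lemma idealMl P r x : is_ideal P -> P x -> P (r * x).
Proof. by case=> _ _ hM; apply: hM. Qed.

Lemma idealMr P r x : is_ideal P -> P x -> P (x * r).
Proof. by rewrite mulrC; apply: idealMl. Qed.

Lemma idealB P x y : is_ideal P -> P x -> P y -> P (x - y).
Proof. by move=> hP hx hy; rewrite -mulN1r; apply: idealD => //; apply: idealMl. Qed.

Lemma ideal_sum P (T : eqType) (s : seq T) (F : T -> R) : is_ideal P ->
  (forall t, t \in s -> P (F t)) -> P (\sum_(t <- s) F t).
Proof.
move=> hP; elim: s => [|t s IH] hF; first by rewrite big_nil; exact: ideal0.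
rewrite big_cons; apply: idealD => //; first by apply: hF; rewrite mem_head.
by apply: IH => u hu; apply: hF; rewrite in_cons hu orbT.
Qed.

Lemma ideal_sum_ord P n (F : 'I_n -> R) : is_ideal P ->
  (forall i, P (F i)) -> P (\sum_(i < n) F i).
Proof. by move=> hP hF; apply: ideal_sum. Qed.

Lemma ideal_subr_trans P x y z : is_ideal P -> P (x - y) -> P (y - z) -> P (x - z).
Proof. by move=> hP hxy hyz; rewrite -[x](subrK y) -addrA; apply: idealD. Qed.

Lemma ideal_subrP P x y : is_ideal P -> P (x - y) -> P x <-> P y.
Proof.
move=> hP hxy; split => [hx|hy]; last by rewrite -[x](subrK y); apply: idealD.
have -> : y = x - (x - y) by rewrite opprB addrC subrK.
exact: idealB.
Qed.

Lemma zero_ideal_ideal : is_ideal (@zero_ideal R).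
Proof. by rewrite /zero_ideal; split=> [|x y -> ->|r x ->]; rewrite ?addr0 ?mulr0. Qed.

Lemma proper_ideal_sub_max P : is_proper_ideal P -> forall x, P x -> maxid x.
Proof.
move=> [hP h1] x hx; apply/negP => hu; apply: h1.
by rewrite -(mulVr hu); apply: idealMl.
Qed.

Lemma zero_ideal_sub_max x : zero_ideal x -> maxid x.
Proof. by move=> ->; rewrite /maxid unitr0. Qed.

Lemma span_mod_ideal P n (w : 'I_n -> R) : is_ideal P ->
  is_ideal (fun x => exists c : 'I_n -> R, P (x - \sum_i c i * w i)).
Proof.
move=> hP; split.
- by exists (fun _ => 0); rewrite big1 ?subr0 => [|i _]; [exact: ideal0 | exact: mul0r].
- move=> x y [c hc] [c' hc']; exists (fun i => c i + c' i).
  rewrite (eq_bigr _ (fun i _ => mulrDl _ _ _)) big_split opprD addrACA.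
  exact: idealD.
- move=> r x [c hc]; exists (fun i => r * c i).
  under eq_bigr do rewrite -mulrA; rewrite -mulr_sumr -mulrBr.
  exact: idealMl.
Qed.

Definition msq_ideal P :=
  is_ideal P /\ (forall a b, maxid a -> maxid b -> P (a * b)).

Lemma msq_ideal_prod P : msq_ideal P ->
  forall z, prod_ideal (@maxid R) (@maxid R) z -> P z.
Proof. by move=> [hP hm] z [s [hs ->]]; apply: ideal_sum => // t /hs []; apply: hm. Qed.

Lemma prod_ideal_ideal : is_local R -> is_ideal (prod_ideal (@maxid R) (@maxid R)).
Proof.
move=> hl; split.
- by exists [::]; rewrite big_nil.
- move=> x y [s [hs ->]] [t [ht ->]]; exists (s ++ t); rewrite big_cat; split => //.
  by move=> p; rewrite mem_cat => /orP[/hs|/ht].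
- move=> r x [s [hs ->]]; exists [seq (r * p.1, p.2) | p <- s]; split.
  + by move=> p /mapP [q /hs [h1 h2] ->]; split => //; apply: idealMl.
  + by rewrite big_map mulr_sumr; apply: eq_bigr => p _; rewrite mulrA.
Qed.

Lemma msq_plus_msq_ideal J : is_local R -> is_ideal J -> msq_ideal (msq_plus J).
Proof.
move=> hl hJ; have hp := prod_ideal_ideal hl; split; first split.
- by exists 0, 0; rewrite addr0; split; [exact: ideal0 | split; [exact: ideal0|]].
- move=> x y [a [b [ha [hb ->]]]] [c [d [hc [hd ->]]]].
  exists (a + c), (b + d); rewrite addrACA.
  by split; [exact: idealD | split; [exact: idealD|]].
- move=> r x [a [b [ha [hb ->]]]]; exists (r * a), (r * b).
  by rewrite mulrDr; split; [exact: idealMl | split; [exact: idealMl|]].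
- move=> a b ha hb; exists (a * b), 0; rewrite addr0.
  split; last by split; [exact: ideal0|].
  by exists [:: (a, b)]; rewrite big_seq1; split => // p; rewrite inE => /eqP ->.
Qed.

Lemma msq_plus_sub J z : J z -> msq_plus J z.
Proof.
by move=> hz; exists 0, z; rewrite add0r; split => //; exists [::]; rewrite big_nil.
Qed.

Lemma msq_plus_mono J J' : (forall z, J z -> J' z) ->
  forall z, msq_plus J z -> msq_plus J' z.
Proof. by move=> h z [a [b [ha [hb ->]]]]; exists a, b; do 2!split => //; apply: h. Qed.

End Ideals.

Lemma preim_ideal (R S : comUnitRingType) (f : {rmorphism R -> S}) (Q : S -> Prop) :
  is_ideal Q -> is_ideal (fun x => Q (f x)).
Proof.
move=> hQ; split=> [|x y|r x] /=; rewrite ?rmorph0 ?rmorphD ?rmorphM; first exact: ideal0.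
  exact: idealD.
exact: idealMl.
Qed.

Section Extension.
Variables (R S : comUnitRingType) (f : {rmorphism R -> S}).
Implicit Types I : R -> Prop.

Lemma ext_ideal I : is_ideal (ext f I).
Proof.
split.
- by exists [::]; rewrite big_nil.
- move=> x y [s [hs ->]] [t [ht ->]]; exists (s ++ t); rewrite big_cat; split => //.
  by move=> p; rewrite mem_cat => /orP[/hs|/ht].
- move=> r x [s [hs ->]]; exists [seq (p.1, r * p.2) | p <- s]; split.
  + by move=> p /mapP [q /hs h ->].
  + by rewrite big_map mulr_sumr; apply: eq_bigr => p _; rewrite mulrCA.
Qed.

Lemma ext_image I x : I x -> ext f I (f x).
Proof.
move=> hx; exists [:: (x, 1)]; rewrite big_seq1 mulr1.
by split => // p; rewrite inE => /eqP ->.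
Qed.

Lemma ext_sub I (Q : S -> Prop) : is_ideal Q -> (forall x, I x -> Q (f x)) ->
  forall z, ext f I z -> Q z.
Proof. by move=> hQ hI z [s [hs ->]]; apply: ideal_sum => // p /hs /hI; apply: idealMr. Qed.

Lemma ext_mono I I' : (forall x, I x -> I' x) -> forall z, ext f I z -> ext f I' z.
Proof. by move=> h; apply: ext_sub => [|x /h]; [exact: ext_ideal | exact: ext_image]. Qed.

Lemma ext_zero : ext f (@zero_ideal R) = @zero_ideal S.
Proof.
apply: functional_extensionality => z; apply: propositional_extensionality; split.
  by apply: ext_sub => [|x ->]; [exact: zero_ideal_ideal | rewrite /zero_ideal rmorph0].
by move=> ->; exact: (ideal0 (ext_ideal _)).
Qed.

Lemma ext_sub_max I : local_hom f -> is_local S -> (forall x, I x -> maxid x) ->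
  forall z, ext f I z -> maxid z.
Proof. by move=> hf hS hI; apply: ext_sub => // x /hI /hf. Qed.

Lemma msq_plus_rmorph I x : local_hom f -> msq_plus I x -> msq_plus (ext f I) (f x).
Proof.
move=> hf [p [q [[s [hs ->]] [hq ->]]]]; exists (f (\sum_(t <- s) t.1 * t.2)), (f q).
split; last by split; [exact: ext_image | rewrite rmorphD].
exists [seq (f t.1, f t.2) | t <- s]; rewrite big_map rmorph_sum; split.
  by move=> t /mapP [u /hs [h1 h2] ->]; split; apply: hf.
by apply: eq_bigr => t _; rewrite rmorphM.
Qed.

End Extension.

Lemma eq_ext (R S : comUnitRingType) (f g : {rmorphism R -> S}) I :
  f =1 g -> ext f I = ext g I.
Proof.
move=> E; apply: functional_extensionality => y; apply: propositional_extensionality.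
by split => -[s [h ->]]; exists s; split => //; apply: eq_bigr => p _; rewrite E.
Qed.

Lemma ext_comp (A B D : comUnitRingType) (phi : {rmorphism A -> B})
  (psi : {rmorphism B -> D}) I : ext psi (ext phi I) = ext (psi \o phi) I.
Proof.
apply: functional_extensionality => z; apply: propositional_extensionality; split.
  apply: ext_sub; first exact: ext_ideal.
  apply: (ext_sub (preim_ideal psi (ext_ideal _ _))) => x hx.
  exact: (ext_image (psi \o phi)).
apply: ext_sub; first exact: ext_ideal.
by move=> x hx; apply: ext_image; apply: ext_image.
Qed.

Record lring := LRing {
  lring_sort :> comUnitRingType;
  lring_local : is_local lring_sort }.

Section ResidueField.
Local Open Scope quotient_scope.
Variable R : lring.

Definition maxid_pred : {pred R} := fun x => x \isn't a GRing.unit.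

Lemma maxid_pred_idealr : idealr_closed maxid_pred.
Proof.
case: (lring_local R) => _ hD hM.
split; first by rewrite unfold_in /maxid_pred /= unitr0.
  by rewrite unfold_in /maxid_pred /= negbK unitr1.
by move=> a u v; rewrite !unfold_in /= => hu hv; exact: hD _ _ (hM a u hu) hv.
Qed.

HB.instance Definition _ := isIdealr.Build R maxid_pred maxid_pred_idealr.

Definition res := {ideal_quot maxid_pred}.
HB.instance Definition _ := GRing.ComNzRing.on res.

Definition rproj (x : R) : res := \pi_res x.

Fact rproj_zmod : zmod_morphism rproj.
Proof. by move=> x y; rewrite /rproj (rmorphB (\pi_res : R -> res)). Qed.

Fact rproj_monoid : monoid_morphism rproj.
Proof.
split=> [|x y]; rewrite /rproj; first exact: (rmorph1 (\pi_res : R -> res)).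
exact: (rmorphM (\pi_res : R -> res)).
Qed.

HB.instance Definition _ := GRing.isZmodMorphism.Build R res rproj rproj_zmod.
HB.instance Definition _ := GRing.isMonoidMorphism.Build R res rproj rproj_monoid.

Lemma rproj_eq0 x : (rproj x == 0) = ~~ (x \is a GRing.unit).
Proof. by rewrite /rproj -(rmorph0 (\pi_res : R -> res)) -Quotient.idealrBE subr0. Qed.

Lemma rprojK (q : res) : rproj (repr q) = q.
Proof. exact: reprK. Qed.

Definition res_inv (q : res) : res := rproj (repr q)^-1.

Lemma res_mulVf (q : res) : q != 0 -> res_inv q * q = 1.
Proof.
move=> hq; have hu : repr q \is a GRing.unit by apply: contraNT hq; rewrite -rproj_eq0 rprojK.
by rewrite /res_inv -{2}[q]rprojK -rmorphM mulVr // rmorph1.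
Qed.

Lemma res_inv0 : res_inv 0 = 0.
Proof.
have h : repr (0 : res) \isn't a GRing.unit by rewrite -rproj_eq0 rprojK.
by rewrite /res_inv (invr_out h) rprojK.
Qed.

HB.instance Definition _ := GRing.ComNzRing_isField.Build res res_mulVf res_inv0.

Lemma rproj_eq0P x : rproj x = 0 <-> maxid x.
Proof. by rewrite /maxid -rproj_eq0; split => [->|/eqP]. Qed.

End ResidueField.

(* [cot_basis J] is [mbasis (msq_plus J)]. *)
Definition mbasis (R : comUnitRingType) (P : R -> Prop) d (y : 'I_d -> R) :=
  [/\ (forall i, maxid (y i)),
      (forall a : 'I_d -> R, P (\sum_(i < d) a i * y i) -> forall i, maxid (a i)) &
      (forall z, maxid z -> exists a : 'I_d -> R, P (z - \sum_(i < d) a i * y i))].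

Section Bases.
Variable S : lring.
Implicit Types P : S -> Prop.

Lemma sum_coords_congr P e d (u : 'I_e -> S) (y : 'I_d -> S) (M : 'M[S]_(e, d))
  (c : 'I_e -> S) : is_ideal P -> (forall i, P (u i - \sum_l M i l * y l)) ->
  P (\sum_i c i * u i - \sum_l (\sum_i c i * M i l) * y l).
Proof.
move=> hP hM.
have <- : \sum_i c i * (u i - \sum_l M i l * y l) =
          \sum_i c i * u i - \sum_l (\sum_i c i * M i l) * y l.
  rewrite (eq_bigr _ (fun i _ => mulrBr _ _ _)) sumrB; congr (_ - _).
  under eq_bigr => i _ do rewrite mulr_sumr.
  rewrite exchange_big /=; apply: eq_bigr => l _; rewrite mulr_suml.
  by apply: eq_bigr => i _; rewrite mulrA.
by apply: ideal_sum_ord => // i; apply: idealMl.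
Qed.

Lemma mbasis_sum_eq0P P d (y : 'I_d -> S) (a : 'I_d -> S) : msq_ideal P -> mbasis P y ->
  P (\sum_l a l * y l) <-> forall l, rproj (a l) = 0.
Proof.
move=> [hP hm] [hy hind _]; split => [/hind ha l | ha]; first exact/rproj_eq0P.
by apply: ideal_sum_ord => // l; apply: hm => //; apply/rproj_eq0P.
Qed.

Lemma mbasis_coords P d (y : 'I_d -> S) k (z : 'I_k -> S) : mbasis P y ->
  (forall i, maxid (z i)) -> exists Z : 'M[S]_(k, d), forall i, P (z i - \sum_l Z i l * y l).
Proof.
case=> _ _ hspan hz; have [a ha] := fin_all_exists (fun i => hspan _ (hz i)).
by exists (\matrix_(i, l) a i l) => i; under eq_bigr => l _ do rewrite mxE.
Qed.

Lemma mbasis_coords_eq0P P d e (y : 'I_d -> S) (w : 'I_e -> S) (Z : 'M[S]_(e, d))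
  (a : 'I_e -> S) : msq_ideal P -> mbasis P y ->
  (forall i, P (w i - \sum_l Z i l * y l)) ->
  P (\sum_i a i * w i) <-> (\row_i rproj (a i)) *m map_mx (@rproj S) Z = 0.
Proof.
move=> hP hy hZ; have hcongr := sum_coords_congr a hP.1 hZ.
have coordE l :
    (\row_i rproj (a i) *m map_mx (@rproj S) Z) 0 l = rproj (\sum_i a i * Z i l).
  by rewrite !mxE rmorph_sum; apply: eq_bigr => i _; rewrite rmorphM !mxE.
split => [/(ideal_subrP hP.1 hcongr) /(mbasis_sum_eq0P _ hP hy) h | h].
  by apply/rowP => l; rewrite coordE h mxE.
apply/(ideal_subrP hP.1 hcongr)/(mbasis_sum_eq0P _ hP hy) => l.
by rewrite -coordE h mxE.
Qed.

Lemma mbasis_le_rank P d d' (y : 'I_d -> S) (z : 'I_d' -> S) (Y : 'M[S]_(d, d'))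
  (Z : 'M[S]_(d', d)) : msq_ideal P -> mbasis P y ->
  (forall i, P (y i - \sum_j Y i j * z j)) -> (forall j, P (z j - \sum_l Z j l * y l)) ->
  (d <= \rank (map_mx (@rproj S) Z))%N.
Proof.
move=> hP hy hY hZ.
have YZ1 : map_mx (@rproj S) (Y *m Z) = 1%:M.
  apply/matrixP => i l; rewrite !mxE.
  suff /eqP : rproj ((i == l)%:R - \sum_j Y i j * Z j l) = 0.
    by rewrite rmorphB rmorph_nat subr_eq0 => /eqP.
  move: l; apply/(mbasis_sum_eq0P (fun l => (i == l)%:R - \sum_j Y i j * Z j l) hP hy).
  under eq_bigr => l _ do rewrite mulrBl.
  rewrite sumrB sum_delta; apply: ideal_subr_trans hP.1 (hY i) _.
  exact: sum_coords_congr hP.1 hZ.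
have := mxrankM_maxr (map_mx (@rproj S) Y) (map_mx (@rproj S) Z).
by rewrite -map_mxM YZ1 mxrank1.
Qed.

Lemma mbasis_size_le P d d' (y : 'I_d -> S) (y' : 'I_d' -> S) : msq_ideal P ->
  mbasis P y -> mbasis P y' -> (d <= d')%N.
Proof.
move=> hP hy hy'.
have [Y hY] := mbasis_coords hy' (let: And3 h _ _ := hy in h).
have [Z hZ] := mbasis_coords hy (let: And3 h _ _ := hy' in h).
exact: leq_trans (mbasis_le_rank hP hy hY hZ) (rank_leq_row _).
Qed.

Lemma mbasis_size_unique P d d' (y : 'I_d -> S) (y' : 'I_d' -> S) : msq_ideal P ->
  mbasis P y -> mbasis P y' -> d = d'.
Proof.
move=> hP hy hy'.
by apply/eqP; rewrite eqn_leq (mbasis_size_le hP hy hy') (mbasis_size_le hP hy' hy).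
Qed.

(* A dependence relation with a unit coefficient a_j puts g_j in the span of the
   other generators modulo P, so g_j can be dropped. *)
Lemma mbasis_of_spanning P k (g : 'I_k -> S) : is_ideal P -> (forall i, maxid (g i)) ->
  (forall z, maxid z -> exists a : 'I_k -> S, P (z - \sum_i a i * g i)) ->
  exists d (y : 'I_d -> S), mbasis P y.
Proof.
move=> hP; elim: k g => [|k IH] g hg hspan; first by exists 0%N, g; split => // a _ [].
have [indep | dep] := classic (forall a : 'I_k.+1 -> S,
  P (\sum_i a i * g i) -> forall i, maxid (a i)).
  by exists k.+1, g; split.
have [a ha] := not_all_ex_not _ _ dep.
have [hPa /not_all_ex_not [j hj]] := imply_to_and _ _ ha.
have hu : a j \is a GRing.unit by apply/negPn/negP.
apply: (IH (fun i => g (lift j i))) => [i | z hz]; first exact: hg.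
have [c hc] := hspan z hz; pose t := c j / a j.
exists (fun i => c (lift j i) - t * a (lift j i)).
suff -> : z - \sum_(i < k) (c (lift j i) - t * a (lift j i)) * g (lift j i) =
          (z - \sum_i c i * g i) + t * \sum_i a i * g i.
  by apply: idealD => //; apply: idealMl.
rewrite !(bigD1_ord j) //= (eq_bigr _ (fun i _ => mulrBl _ _ _)) sumrB.
rewrite mulrDr mulr_sumr mulrA /t divrK //.
under [X in _ = _ + (_ + X)]eq_bigr => i _ do rewrite mulrA.
ring.
Qed.

Lemma mbasis_exists P : msq_ideal P -> noetherian S ->
  exists d (y : 'I_d -> S), mbasis P y.
Proof.
move=> hP nS; have [s hs] := nS _ (lring_local S).
apply: (mbasis_of_spanning (g := fun i : 'I_(size s) => s`_i) hP.1).
- move=> i; apply/hs; exists (mkseq (fun j => (j == i)%:R) (size s)).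
  rewrite -(sum_delta i (fun l : 'I_(size s) => s`_l)).
  by apply: eq_bigr => l _; rewrite nth_mkseq // eq_sym.
- by move=> z /hs [c ->]; exists (fun i => c`_i); rewrite subrr; exact: ideal0 hP.1.
Qed.

Lemma row_free_rprojP k e (B : 'M[S]_(k, e)) :
  (forall c : 'I_k -> S, (forall i, maxid (\sum_j c j * B j i)) -> forall j, maxid (c j))
  <-> row_free (map_mx (@rproj S) B).
Proof.
have coordE (c : 'I_k -> S) i :
    (\row_j rproj (c j) *m map_mx (@rproj S) B) 0 i = rproj (\sum_j c j * B j i).
  by rewrite !mxE rmorph_sum; apply: eq_bigr => j _; rewrite rmorphM !mxE.
split => [hind | hfree c hc j].
- rewrite -kermx_eq0; apply/eqP/row_matrixP => r; rewrite row0.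
  set v := row r _; have hv : v *m map_mx (@rproj S) B = 0.
    by rewrite /v -row_mul mulmx_ker row0.
  clearbody v.
  have vE : \row_j rproj (repr (v 0 j)) = v by apply/rowP => j; rewrite mxE rprojK.
  apply/rowP => j; rewrite mxE -(rprojK (v 0 j)); apply/rproj_eq0P.
  apply: (hind (fun j => repr (v 0 j))) => i; apply/rproj_eq0P.
  by rewrite -coordE vE hv mxE.
- have : \row_j rproj (c j) *m map_mx (@rproj S) B = 0 *m map_mx (@rproj S) B.
    by rewrite mul0mx; apply/rowP => i; rewrite coordE mxE; apply/rproj_eq0P.
  by move/(row_free_inj hfree)/rowP/(_ j); rewrite !mxE => /rproj_eq0P.
Qed.

End Bases.

Definition embdim (R : comUnitRingType) (J : R -> Prop) : nat :=
  epsilon (inhabits 0%N) (fun d => exists y : 'I_d -> R, cot_basis J y).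

Section EmbeddingDimension.
Variables (R : lring) (J : R -> Prop).
Hypotheses (nR : noetherian R) (hJ : is_ideal J).

Let hmsq : msq_ideal (msq_plus J) := msq_plus_msq_ideal (lring_local R) hJ.

Lemma embdim_basis : exists y : 'I_(embdim J) -> R, cot_basis J y.
Proof.
have [d [y hy]] := mbasis_exists hmsq nR.
exact: (epsilon_spec (inhabits 0%N) (fun d => exists y : 'I_d -> R, cot_basis J y)
  (ex_intro _ d (ex_intro _ y hy))).
Qed.

Lemma embdim_unique d (y : 'I_d -> R) : cot_basis J y -> embdim J = d.
Proof. by move=> hy; have [y' hy'] := embdim_basis; exact: mbasis_size_unique hmsq hy' hy. Qed.

End EmbeddingDimension.

Lemma embdim_max (R : comUnitRingType) : local_noetherian R -> embdim (@maxid R) = 0%N.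
Proof.
move=> [lR nR]; apply: (@embdim_unique (LRing lR) (@maxid _) nR lR 0 (fun _ => 0)).
split=> [[] // | _ _ [] // | z hz]; exists (fun _ => 0).
by rewrite big_ord0 subr0; apply: msq_plus_sub.
Qed.

Section CotangentImage.
Variables (S : lring) (N N' : S -> Prop) (d d' e : nat).
Variables (y : 'I_d -> S) (y' : 'I_d' -> S) (u : 'I_e -> S) (M : 'M[S]_(e, d)).
Hypotheses (hN : msq_ideal N) (hN' : msq_ideal N') (hNN' : forall z, N z -> N' z).
Hypotheses (hy : mbasis N y) (hy' : mbasis N' y').
Hypotheses (hu : forall i, N' (u i))
  (hu_span : forall z, N' z -> exists c : 'I_e -> S, N (z - \sum_i c i * u i))
  (hM : forall i, N (u i - \sum_l M i l * y l)).

Lemma coords_span_kermx (Y : 'M[S]_(d, d')) :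
  (forall l, N' (y l - \sum_k Y l k * y' k)) ->
  (map_mx (@rproj S) M == kermx (map_mx (@rproj S) Y))%MS.
Proof.
move=> hY; have inN' a := mbasis_coords_eq0P a hN' hy' hY.
apply/andP; split; apply/row_subP.
  move=> i; apply/sub_kermxP.
  have -> : row i (map_mx (@rproj S) M) = \row_l rproj (M i l).
    by apply/rowP => l; rewrite !mxE.
  exact/inN'/(ideal_subrP hN'.1 (hNN' (hM i)))/hu.
move=> r; set v := row r _.
have /sub_kermxP hv : (v <= kermx (map_mx (@rproj S) Y))%MS by exact: row_sub.
clearbody v; pose a l := repr (v 0 l).
have vE : v = \row_l rproj (a l) by apply/rowP => l; rewrite mxE rprojK.
have [c hc] : exists c : 'I_e -> S, N (\sum_l a l * y l - \sum_i c i * u i).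
  by apply: hu_span; apply/inN'; rewrite -vE.
have := ideal_subr_trans hN.1 hc (sum_coords_congr c hN.1 hM).
rewrite -sumrB; under eq_bigr do rewrite -mulrBl; move/(mbasis_sum_eq0P _ hN hy) => hcoord.
apply/submxP; exists (\row_i rproj (c i)); apply/rowP => l.
move/eqP: (hcoord l); rewrite vE !mxE rmorphB rmorph_sum subr_eq0 => /eqP ->.
by apply: eq_bigr => i _; rewrite rmorphM !mxE.
Qed.

Lemma rank_coords_span : (\rank (map_mx (@rproj S) M) + d')%N = d.
Proof.
have [Y hY] := mbasis_coords hy' (let: And3 h _ _ := hy in h).
have [Z hZ] := mbasis_coords hy (let: And3 h _ _ := hy' in h).
have rkY : \rank (map_mx (@rproj S) Y) = d'.
  apply/eqP; rewrite eqn_leq rank_leq_col.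
  exact: mbasis_le_rank hN' hy' (fun j => hNN' (hZ j)) hY.
have := rank_leq_row (map_mx (@rproj S) Y).
by rewrite (eqmx_rank (coords_span_kermx hY)) mxrank_ker rkY; lia.
Qed.

End CotangentImage.

Section RegularityDefect.
Variables (R S : lring) (f : {rmorphism R -> S}) (I : R -> Prop).
Hypotheses (hf : local_hom f) (nR : noetherian R) (nS : noetherian S).
Hypotheses (hI : is_ideal I) (hIm : forall x, I x -> maxid x).

Let N := msq_plus (ext f I).
Let N' := msq_plus (ext f (@maxid R)).
Let hN : msq_ideal N := msq_plus_msq_ideal (lring_local S) (ext_ideal f I).
Let hN' : msq_ideal N' := msq_plus_msq_ideal (lring_local S) (ext_ideal f _).
Let hNN' z : N z -> N' z. Proof. by apply: msq_plus_mono; apply: ext_mono. Qed.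

Section CotangentBasis.
Variables (e : nat) (x : 'I_e -> R).
Hypothesis hx : cot_basis I x.

Lemma cot_basis_max i : maxid (x i). Proof. by case: hx. Qed.

Lemma cot_image_span z : N' z -> exists c : 'I_e -> S, N (z - \sum_i c i * f (x i)).
Proof.
pose Q w := exists c : 'I_e -> S, N (w - \sum_i c i * f (x i)).
have hQ : is_ideal Q := span_mod_ideal (fun i => f (x i)) hN.1.
have NQ w : N w -> Q w.
  by exists (fun _ => 0); rewrite big1 ?subr0 // => i _; rewrite mul0r.
move=> [p [w [hp [hw ->]]]]; apply: (idealD hQ).
  by apply: NQ; apply: msq_ideal_prod hN _ hp.
apply: (ext_sub hQ _ hw) => t ht; have [a ha] := (let: And3 _ _ h := hx in h) t ht.
exists (fun i => f (a i)); have := msq_plus_rmorph hf ha.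
by rewrite rmorphB rmorph_sum; under eq_bigr do rewrite rmorphM.
Qed.

Variables (y : 'I_(embdim (ext f I)) -> S) (M : 'M[S]_(e, embdim (ext f I))).
Hypotheses (hy : cot_basis (ext f I) y) (hM : forall i, N (f (x i) - \sum_l M i l * y l)).

Let V := map_mx (@rproj S) M.

Lemma rank_cot_image : (\rank V + embdim (ext f (@maxid R)))%N = embdim (ext f I).
Proof.
have [y' hy'] := embdim_basis nS (ext_ideal f (@maxid R)).
apply: rank_coords_span hN hN' hNN' hy hy' _ cot_image_span hM => i.
by apply/msq_plus_sub/ext_image; apply: cot_basis_max.
Qed.

Lemma ker_familyP k (b : 'I_k -> 'I_e -> S) :
  ker_family f (ext f I) x b <->
  row_free (map_mx (@rproj S) (\matrix_(j, i) b j i)) /\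
  map_mx (@rproj S) (\matrix_(j, i) b j i) *m V = 0.
Proof.
set B := map_mx (@rproj S) (\matrix_(j, i) b j i).
have indepE : (forall c : 'I_k -> S, (forall i, maxid (\sum_j c j * b j i)) ->
    forall j, maxid (c j)) <-> row_free B.
  have sumE (c : 'I_k -> S) i :
      \sum_j c j * (\matrix_(j, i) b j i) j i = \sum_j c j * b j i.
    by apply: eq_bigr => j _; rewrite mxE.
  by rewrite -row_free_rprojP; split => h c hc; apply: h => i; rewrite ?sumE // -sumE.
have inN j : N (\sum_i f (x i) * b j i) <-> row j B *m V = 0.
  have -> : row j B = \row_i rproj (b j i) by apply/rowP => i; rewrite !mxE.
  have -> : \sum_i f (x i) * b j i = \sum_i b j i * f (x i).
    by apply: eq_bigr => i _; rewrite mulrC.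
  exact: mbasis_coords_eq0P hN hy hM.
rewrite /ker_family -indepE; split => [[hk hind] | [hfree hker]]; split => //.
  by apply/(row_matrixP _ 0) => j; rewrite row_mul row0; apply/inN/hk.
by move=> j; apply/inN; rewrite -row_mul hker row0.
Qed.

Lemma ker_family_rank r :
  ((exists b : 'I_r -> 'I_e -> S, ker_family f (ext f I) x b) /\
   (forall k (b : 'I_k -> 'I_e -> S), ker_family f (ext f I) x b -> (k <= r)%N)) <->
  r = \rank (kermx V).
Proof.
pose b0 (j : 'I_(\rank (kermx V))) i := repr (row_base (kermx V) j i).
have hb0 : ker_family f (ext f I) x b0.
  apply/ker_familyP.
  have -> : map_mx (@rproj S) (\matrix_(j, i) b0 j i) = row_base (kermx V).
    by apply/matrixP => j i; rewrite mxE mxE rprojK.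
  by split; [exact: row_base_free | apply/sub_kermxP; rewrite eq_row_base].
have le_rank k (b : 'I_k -> 'I_e -> S) :
    ker_family f (ext f I) x b -> (k <= \rank (kermx V))%N.
  by move/ker_familyP => [/eqP hfree /sub_kermxP /mxrankS]; rewrite hfree.
split => [[[b hb] hmax] | ->]; last by split; [exists b0 | exact: le_rank].
by apply/eqP; rewrite eqn_leq (le_rank _ _ hb) (hmax _ _ hb0).
Qed.

End CotangentBasis.

Lemma rd_rel_spec_exists : exists r, rd_rel_spec f I (ext f I) r.
Proof.
have [x hx] := embdim_basis nR hI.
have [y hy] := embdim_basis nS (ext_ideal f I).
have [M hM] := mbasis_coords hy (fun i => hf (cot_basis_max hx i)).
exists (\rank (kermx (map_mx (@rproj S) M))), _, x; split => //.
exact: (ker_family_rank hy hM _).2.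
Qed.

Lemma rd_rel_spec_embdim r : rd_rel_spec f I (ext f I) r ->
  (r + embdim (ext f I) = embdim I + embdim (ext f (@maxid R)))%N.
Proof.
move=> [e [x [hx hr]]].
have [y hy] := embdim_basis nS (ext_ideal f I).
have [M hM] := mbasis_coords hy (fun i => hf (cot_basis_max hx i)).
have := rank_cot_image hx hy hM; have := rank_leq_row (map_mx (@rproj S) M).
have := embdim_unique nR hI hx.
by rewrite (ker_family_rank hy hM r).1 // mxrank_ker; lia.
Qed.

Lemma rdq_embdim : (rdq f I + embdim (ext f I) = embdim I + embdim (ext f (@maxid R)))%N.
Proof.
have [r hr] := rd_rel_spec_exists.
exact: rd_rel_spec_embdim (epsilon_spec (inhabits 0%N) _ (ex_intro _ r hr)).
Qed.

End RegularityDefect.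

Lemma rdq_embdim_local (R S : comUnitRingType) (f : {rmorphism R -> S}) (I : R -> Prop) :
  local_noetherian R -> local_noetherian S -> local_hom f ->
  is_ideal I -> (forall x, I x -> maxid x) ->
  (rdq f I + embdim (ext f I) = embdim I + embdim (ext f (@maxid R)))%N.
Proof.
move=> [lR nR] [lS nS] hf hI hIm.
exact: (@rdq_embdim (LRing lR) (LRing lS) f I hf nR nS hI hIm).
Qed.

Lemma rdq_max (R S : comUnitRingType) (f : {rmorphism R -> S}) :
  local_noetherian R -> local_noetherian S -> local_hom f -> rdq f (@maxid R) = 0%N.
Proof.
move=> hR hS hf; have := rdq_embdim_local hR hS hf hR.1 (fun x hx => hx).
by rewrite embdim_max //; lia.
Qed.

Section Square.
Variables (A B C D : comUnitRingType).
Variables (phi : {rmorphism A -> B}) (phi' : {rmorphism A -> C}).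
Variables (psi : {rmorphism B -> D}) (psi' : {rmorphism C -> D}).
Hypotheses (hA : local_noetherian A) (hB : local_noetherian B).
Hypotheses (hC : local_noetherian C) (hD : local_noetherian D).
Hypotheses (lphi : local_hom phi) (lphi' : local_hom phi').
Hypotheses (lpsi : local_hom psi) (lpsi' : local_hom psi').
Hypothesis comm : forall a, psi (phi a) = psi' (phi' a).

Lemma rd_square_quotient I : is_ideal I -> (forall x, I x -> maxid x) ->
  (rdq phi I + rdq psi (ext phi I))%N%:Z - (rdq phi' I + rdq psi' (ext phi' I))%N%:Z =
  (embdim (ext phi (@maxid A)) + embdim (ext psi (@maxid B)))%N%:Z
  - (embdim (ext phi' (@maxid A)) + embdim (ext psi' (@maxid C)))%N%:Z.
Proof.
move=> hI hIm.
have := rdq_embdim_local hA hB lphi hI hIm.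
have := rdq_embdim_local hB hD lpsi (ext_ideal phi I) (ext_sub_max lphi hB.1 hIm).
have := rdq_embdim_local hA hC lphi' hI hIm.
have := rdq_embdim_local hC hD lpsi' (ext_ideal phi' I) (ext_sub_max lphi' hC.1 hIm).
have -> : ext psi' (ext phi' I) = ext psi (ext phi I).
  by rewrite !ext_comp; apply: eq_ext => a /=; rewrite comm.
lia.
Qed.

End Square.

Theorem theorem3p4 (A B C D : comUnitRingType)
  (phi : {rmorphism A -> B}) (phi' : {rmorphism A -> C})
  (psi : {rmorphism B -> D}) (psi' : {rmorphism C -> D}) :
  local_noetherian A -> local_noetherian B ->
  local_noetherian C -> local_noetherian D ->
  local_hom phi -> local_hom phi' -> local_hom psi -> local_hom psi' ->
  (forall a, psi (phi a) = psi' (phi' a)) ->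
  forall I : A -> Prop, is_proper_ideal I ->
  let rdS : int := (rd phi + rd psi)%N%:Z - (rd phi' + rd psi')%N%:Z in
  let rdSI : int := (rdq phi I + rdq psi (ext phi I))%N%:Z
                    - (rdq phi' I + rdq psi' (ext phi' I))%N%:Z in
  let rdSK : int := (rdq phi (@maxid A) + rdq psi (ext phi (@maxid A)))%N%:Z
                    - (rdq phi' (@maxid A) + rdq psi' (ext phi' (@maxid A)))%N%:Z in
  [/\ rdS = rdSI, rdSI = rdSK &
      rdSK = (rdq psi (ext phi (@maxid A)))%:Z - (rdq psi' (ext phi' (@maxid A)))%:Z].
Proof.
move=> hA hB hC hD lphi lphi' lpsi lpsi' comm I hI rdS rdSI rdSK.
have invariant := rd_square_quotient hA hB hC hD lphi lphi' lpsi lpsi' comm.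
have rdS_inv := invariant _ (@zero_ideal_ideal A) (@zero_ideal_sub_max A).
rewrite !ext_zero in rdS_inv.
have rdSI_inv := invariant _ hI.1 (proper_ideal_sub_max hI).
have rdSK_inv := invariant _ hA.1 (fun x hx => hx).
split.
- by rewrite /rdS /rdSI /rd rdS_inv rdSI_inv.
- by rewrite /rdSI /rdSK rdSI_inv rdSK_inv.
- by rewrite /rdSK (rdq_max hA hB lphi) (rdq_max hA hC lphi').
Qed.
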